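(* Let $\alpha\in[0,1]$, let $\mathbf X\in\mathbb R^{d\times n}$, $\mathbf V\in\mathbb R^{m\times d}$, $\mathbf W\in\mathbb R^{k\times m}$, and for $i=1,\dots,m$ let $\boldsymbol\Lambda^i\in\mathbb R^{n\times n}$ be diagonal with $(\boldsymbol\Lambda^i)_{jj}=\sigma'((\mathbf V_{i\bullet}\mathbf X)_j)$, where $\sigma(z)=\max\{\alpha z,z\}$ is the Leaky-ReLU and $\sigma'$ takes values in $\{\alpha,1\}$ (any choice in $\{\alpha,1\}$ at $z=0$). Define $$\boldsymbol\Gamma=\sum_{i=1}^m\boldsymbol\Lambda^i\mathbf X^\top\mathbf V_{i\bullet}^\top\mathbf V_{i\bullet}\mathbf X\boldsymbol\Lambda^i,\qquad \widehat{\mathbf G}_O=\sum_{i=1}^m\boldsymbol\Lambda^i\mathbf X^\top\mathbf X\boldsymbol\Lambda^i\otimes\mathbf W_{\bullet i}\mathbf W_{\bullet i}^\top+\boldsymbol\Gamma\otimes\mathbf I_k\in\mathbb R^{kn\times kn}.$$ If $\alpha^2\sigma_{\min}^2(\mathbf X)\sigma_{\min}^2(\mathbf W)+\lambda_{\min}(\boldsymbol\Gamma)>0$, then $\widehat{\mathbf G}_O$ is positive definite and $$\kappa(\widehat{\mathbf G}_O)\le\frac{\sigma_{\max}^2(\mathbf X)\,\sigma_{\max}^2(\mathbf W)+\lambda_{\max}(\boldsymbol\Gamma)}{\alpha^2\,\sigma_{\min}^2(\mathbf X)\,\sigma_{\min}^2(\mathbf W)+\lambda_{\min}(\boldsymb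ol\Gamma)}.$$
   Context: $\mathbf X$ is the data matrix with columns the $n$ inputs; $\mathbf V_{i\bullet}$ is the $i$-th row of $\mathbf V$ and $\mathbf W_{\bullet i}$ the $i$-th column of $\mathbf W$; $\widehat{\mathbf G}_O$ has the same nonzero eigenvalues as the Gauss–Newton matrix of $F(\mathbf x)=\mathbf W\sigma(\mathbf V\mathbf x)$. Conventions: $\sigma_{\max}^2(\mathbf X)=\lambda_{\max}(\mathbf X^\top\mathbf X)$, $\sigma_{\min}^2(\mathbf X)=\lambda_{\min}(\mathbf X^\top\mathbf X)$, $\sigma_{\max}^2(\mathbf W)=\lambda_{\max}(\mathbf W\mathbf W^\top)$, $\sigma_{\min}^2(\mathbf W)=\lambda_{\min}(\mathbf W\mathbf W^\top)$. For a symmetric positive definite matrix, $\kappa=\lambda_{\max}/\lambda_{\min}$. $\otimes$ is the Kronecker product. *)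

From HB Require Import structures.
From mathcomp Require Import all_boot all_order all_algebra.
From mathcomp Require Import boolp classical_sets reals.
Set Implicit Arguments. Unset Strict Implicit. Unset Printing Implicit Defensive.
Import Order.TTheory GRing.Theory Num.Theory.
Local Open Scope ring_scope.
Local Open Scope classical_set_scope.

(* Kronecker product, standard (lexicographic) index convention:
   (A ⊗ B)_{(i,k),(j,l)} = A_{ij} B_{kl}, with (i,k) at position i*m2+k. *)
Definition kron (R : pzRingType) (m1 n1 m2 n2 : nat)
    (A : 'M[R]_(m1, n1)) (B : 'M[R]_(m2, n2)) : 'M[R]_(m1 * m2, n1 * n2) :=
  \matrix_(p, q)
    let ik := enum_val (cast_ord (esym (mxvec_cast m1 m2)) p) in
    let jl := enum_val (cast_ord (esym (mxvec_cast n1 n2)) q) in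
    A ik.1 jl.1 * B ik.2 jl.2.

Definition lambda_max (R : realType) (n : nat) (A : 'M[R]_n) : R :=
  sup [set a : R | eigenvalue A a].
Definition lambda_min (R : realType) (n : nat) (A : 'M[R]_n) : R :=
  inf [set a : R | eigenvalue A a].

Definition posdef (R : realType) (n : nat) (A : 'M[R]_n) : Prop :=
  A^T = A /\ forall x : 'cV[R]_n, x != 0 -> 0 < (x^T *m A *m x) 0 0.

Definition cond_num (R : realType) (n : nat) (A : 'M[R]_n) : R :=
  lambda_max A / lambda_min A.

Definition leaky_relu (R : realType) (alpha z : R) : R := Num.max (alpha * z) z.
Definition leaky_relu_deriv (R : realType) (alpha z s : R) : Prop :=
  (s = alpha \/ s = 1) /\ (0 < z -> s = 1) /\ (z < 0 -> s = alpha).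

(* Write v in R^(n*k) as mxvec Z with Z an n x k matrix and w_i the columns
   of W.  The quadratic form of G then splits as
     sum_i |(Z w_i)^T Lam_i X^T|^2  +  sum_c (col c Z)^T Gamma (col c Z).
   Rayleigh bounds for X^T X, the slopes alpha <= sigma' <= 1, and
   sum_i |Z w_i|^2 = ||Z W||_F^2 = sum_j (row j Z) W W^T (row j Z)^T, bounded by
   Rayleigh for W W^T, sandwich the first sum; Rayleigh for Gamma sandwiches the
   second.  Hence D |v|^2 <= v G v^T <= N |v|^2, with D and N the denominator
   and numerator of the claimed bound, so every eigenvalue of G lies in
   [D, N] and kappa(G) <= N / D.  The Rayleigh bounds for a real symmetric
   matrix come from the spectral theorem over R[i]. *)

From HB Require Import structures.
From mathcomp Require Import all_boot all_order all_algebra.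
From mathcomp Require Import boolp classical_sets reals.
From mathcomp Require Import complex polyrcf.
Import Order.TTheory GRing.Theory Num.Theory.
Local Open Scope ring_scope.

Section Spectrum.
Local Open Scope classical_set_scope.
Context {R : realType} {n : nat} (M : 'M[R]_n).

Lemma spectrum_bounded : exists c, forall a, eigenvalue M a -> `|a| < c.
Proof.
exists (cauchy_bound (char_poly M)) => a.
rewrite eigenvalue_root_char => /rootP Ma0.
by apply: cauchy_boundP Ma0; apply: monic_neq0; apply: char_poly_monic.
Qed.

Lemma lambda_min_le a : eigenvalue M a -> lambda_min M <= a.
Proof.
move=> Ma; have [c Mc] := spectrum_bounded; apply: ge_inf Ma.
by exists (- c) => x /Mc; rewrite ltr_norml => /andP[/ltW].
Qed.

Lemma lambda_max_ge a : eigenvalue M a -> a <= lambda_max M.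
Proof.
move=> Ma; have [c Mc] := spectrum_bounded; apply: ub_le_sup Ma.
by exists c => x /Mc; rewrite ltr_norml => /andP[_ /ltW].
Qed.

Lemma lambda_min_ge c : (exists a, eigenvalue M a) ->
  (forall a, eigenvalue M a -> c <= a) -> c <= lambda_min M.
Proof. by move=> [a Ma] cM; apply: lb_le_inf; [exists a | move=> x /cM]. Qed.

Lemma lambda_max_le c : (exists a, eigenvalue M a) ->
  (forall a, eigenvalue M a -> a <= c) -> lambda_max M <= c.
Proof. by move=> [a Ma] Mc; apply: ge_sup; [exists a | move=> x /Mc]. Qed.

(* [inf set0] and [sup set0] are [0] in the reals library. *)
Lemma lambda_extrema_spectrum0 : ~ (exists a, eigenvalue M a) ->
  lambda_min M = 0 /\ lambda_max M = 0.
Proof.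
move=> noeig; rewrite /lambda_min /lambda_max.
suff -> : [set a : R | eigenvalue M a] = set0 by rewrite inf0 sup0.
by rewrite -subset0 => a Ma; apply: noeig; exists a.
Qed.

Lemma lambda_min_le_max : lambda_min M <= lambda_max M.
Proof.
have [[a Ma]|noeig] := pselect (exists a, eigenvalue M a).
  exact: le_trans (lambda_min_le a Ma) (lambda_max_ge a Ma).
by have [-> ->] := lambda_extrema_spectrum0 noeig.
Qed.

Lemma lambda_min_ge0 : (forall a, eigenvalue M a -> 0 <= a) ->
  0 <= lambda_min M.
Proof.
move=> M0; have [ex|noeig] := pselect (exists a, eigenvalue M a).
  exact: lambda_min_ge.
by have [-> _] := lambda_extrema_spectrum0 noeig.
Qed.

End Spectrum.

Definition qform {R : pzRingType} {n} (M : 'M[R]_n) (v : 'rV[R]_n) : R :=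
  (v *m M *m v^T) 0 0.
Definition sqnorm {R : pzRingType} {n} (v : 'rV[R]_n) : R := (v *m v^T) 0 0.

Section QuadraticFormAlgebra.
Context {R : comPzRingType}.

Lemma qform_tr {n} (M : 'M[R]_n) v : qform M^T v = qform M v.
Proof.
rewrite /qform.
have -> : v *m M^T *m v^T = (v *m M *m v^T)^T by rewrite !trmx_mul trmxK mulmxA.
by rewrite mxE.
Qed.

Lemma qformD {n} (A B : 'M[R]_n) v : qform (A + B) v = qform A v + qform B v.
Proof. by rewrite /qform mulmxDr mulmxDl mxE. Qed.

Lemma qform_sum {n m} (A : 'I_m -> 'M[R]_n) v :
  qform (\sum_i A i) v = \sum_i qform (A i) v.
Proof. by rewrite /qform mulmx_sumr mulmx_suml summxE. Qed.

Lemma qform_eigenvector {n} {M : 'M[R]_n} {v a} :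
  v *m M = a *: v -> qform M v = a * sqnorm v.
Proof. by move=> vM; rewrite /qform /sqnorm vM -scalemxAl mxE. Qed.

Lemma qform_gram {n p} (A : 'M[R]_(n, p)) v :
  qform (A *m A^T) v = sqnorm (v *m A).
Proof. by rewrite /qform /sqnorm trmx_mul !mulmxA. Qed.

Lemma qform_diag_conj {n} (M : 'M[R]_n) (d : 'rV[R]_n) v :
  qform (diag_mx d *m M *m diag_mx d) v = qform M (v *m diag_mx d).
Proof. by rewrite /qform trmx_mul tr_diag_mx !mulmxA. Qed.

Lemma mxtrace_qform {n p} (M : 'M[R]_n) (Z : 'M[R]_(n, p)) :
  \tr (Z^T *m M *m Z) = \sum_c qform M (col c Z)^T.
Proof.
rewrite /mxtrace; apply: eq_bigr => c _; rewrite /qform trmxK tr_col !mxE.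
by apply: eq_bigr => j _; rewrite -row_mul !mxE.
Qed.

Lemma mxtrace_gram_cols {n p} (Z : 'M[R]_(n, p)) :
  \tr (Z^T *m Z) = \sum_c sqnorm (col c Z)^T.
Proof.
by rewrite -[Z^T]mulmx1 mxtrace_qform; under eq_bigr do rewrite /qform mulmx1.
Qed.

Lemma mxtrace_gram_rows {n p} (Z : 'M[R]_(n, p)) :
  \tr (Z *m Z^T) = \sum_i sqnorm (row i Z).
Proof.
have := mxtrace_gram_cols (Z^T); rewrite trmxK => ->.
by apply: eq_bigr => i _; rewrite tr_col trmxK.
Qed.

Lemma sum_sqnorm_mul_col {n p q} (Z : 'M[R]_(n, p)) (W : 'M[R]_(p, q)) :
  \sum_i sqnorm (Z *m col i W)^T = \sum_j qform (W *m W^T) (row j Z).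
Proof.
transitivity (\tr ((Z *m W)^T *m (Z *m W))).
  by rewrite mxtrace_gram_cols; apply: eq_bigr => i _; rewrite !colE mulmxA.
rewrite mxtrace_mulC mxtrace_gram_rows.
by apply: eq_bigr => j _; rewrite row_mul qform_gram.
Qed.

End QuadraticFormAlgebra.

Lemma trmx_kron (R : pzRingType) m1 n1 m2 n2
    (A : 'M[R]_(m1, n1)) (B : 'M[R]_(m2, n2)) :
  (kron A B)^T = kron A^T B^T.
Proof. by apply/matrixP => p q; rewrite /kron !mxE. Qed.

Section Kronecker.
Context {R : comPzRingType} {n k : nat}.

Lemma sum_mxvec_index (F : 'I_(n * k) -> R) :
  \sum_p F p = \sum_i \sum_c F (mxvec_index i c).
Proof.
rewrite pair_big (reindex _ (curry_mxvec_bij _ _)) //=.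
by apply: eq_bigr => -[].
Qed.

Lemma kron_mxvec_index (A : 'M[R]_n) (B : 'M[R]_k) i c j l :
  kron A B (mxvec_index i c) (mxvec_index j l) = A i j * B c l.
Proof. by rewrite /kron mxE /mxvec_index !cast_ordK !enum_rankK. Qed.

Lemma mxvec_mul_kron (A : 'M[R]_n) (B : 'M[R]_k) (Z : 'M[R]_(n, k)) :
  mxvec Z *m kron A B = mxvec (A^T *m Z *m B).
Proof.
apply/rowP => p; case/mxvec_indexP: p => j l.
rewrite mxvecE !mxE sum_mxvec_index exchange_big; apply: eq_bigr => c _.
rewrite mxE mulr_suml; apply: eq_bigr => i _.
by rewrite mxvecE kron_mxvec_index mxE mulrCA mulrA.
Qed.

Lemma mxvec_dot (M Z : 'M[R]_(n, k)) :
  (mxvec M *m (mxvec Z)^T) 0 0 = \tr (M *m Z^T).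
Proof.
rewrite mxE sum_mxvec_index; apply: eq_bigr => i _; rewrite mxE.
by apply: eq_bigr => c _; rewrite !mxE !mxvecE.
Qed.

Lemma qform_kron (A : 'M[R]_n) (B : 'M[R]_k) (Z : 'M[R]_(n, k)) :
  qform (kron A B) (mxvec Z) = \tr (A^T *m Z *m B *m Z^T).
Proof. by rewrite /qform mxvec_mul_kron mxvec_dot. Qed.

Lemma qform_kron_rank1 (A : 'M[R]_n) (w : 'cV[R]_k) (Z : 'M[R]_(n, k)) :
  qform (kron A (w *m w^T)) (mxvec Z) = qform A (Z *m w)^T.
Proof.
rewrite qform_kron !mulmxA -[_ *m w^T *m Z^T]mulmxA mxtrace_mulC trace_mx11.
by rewrite -qform_tr /qform trmxK trmx_mul !mulmxA.
Qed.

Lemma qform_kron_id (A : 'M[R]_n) (Z : 'M[R]_(n, k)) :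
  qform (kron A 1%:M) (mxvec Z) = \sum_c qform A (col c Z)^T.
Proof.
rewrite qform_kron mulmx1 mxtrace_mulC mulmxA mxtrace_qform.
by under eq_bigr do rewrite qform_tr.
Qed.

Lemma sqnorm_mxvec_rows (Z : 'M[R]_(n, k)) :
  sqnorm (mxvec Z) = \sum_j sqnorm (row j Z).
Proof. by rewrite /sqnorm mxvec_dot mxtrace_gram_rows. Qed.

Lemma sqnorm_mxvec_cols (Z : 'M[R]_(n, k)) :
  sqnorm (mxvec Z) = \sum_c sqnorm (col c Z)^T.
Proof. by rewrite /sqnorm mxvec_dot mxtrace_mulC mxtrace_gram_cols. Qed.

End Kronecker.

Section RealQuadraticForms.
Context {R : realFieldType}.

Lemma sqnormE {n} (v : 'rV[R]_n) : sqnorm v = \sum_j v 0 j ^+ 2.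
Proof. by rewrite /sqnorm mxE; apply: eq_bigr => j _; rewrite mxE expr2. Qed.

Lemma sqnorm_ge0 {n} (v : 'rV[R]_n) : 0 <= sqnorm v.
Proof. by rewrite sqnormE sumr_ge0 // => j _; rewrite sqr_ge0. Qed.

Lemma sqnorm_gt0 {n} (v : 'rV[R]_n) : v != 0 -> 0 < sqnorm v.
Proof.
apply: contraNT; rewrite -leNgt => v0; apply/eqP/rowP => j; rewrite mxE.
apply/eqP; rewrite -sqrf_eq0 eq_le sqr_ge0 andbT.
apply: le_trans v0; rewrite sqnormE (bigD1 j) //= lerDl.
by rewrite sumr_ge0 // => i _; rewrite sqr_ge0.
Qed.

Lemma sum_sandwich {I : Type} (r : seq I) {lo hi : R} {s f : I -> R} :
  (forall i, lo * s i <= f i <= hi * s i) ->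
  lo * \sum_(i <- r) s i <= \sum_(i <- r) f i <= hi * \sum_(i <- r) s i.
Proof.
move=> sf; rewrite !mulr_sumr.
by apply/andP; split; apply: ler_sum => i _; case/andP: (sf i).
Qed.

Lemma sqnorm_diag_bounds {n} {d : 'rV[R]_n} {lo hi : R} (v : 'rV[R]_n) :
  (forall j, lo <= d 0 j ^+ 2 <= hi) ->
  lo * sqnorm v <= sqnorm (v *m diag_mx d) <= hi * sqnorm v.
Proof.
move=> d_bd; rewrite !sqnormE; apply: sum_sandwich => j.
rewrite mul_mx_diag mxE exprMn ![_ * v 0 j ^+ 2]mulrC.
by case/andP: (d_bd j) => lo_d d_hi; rewrite !ler_wpM2l ?sqr_ge0.
Qed.

End RealQuadraticForms.

Section RealSymmetricSpectrum.
Context {R : realType} {n : nat} (M : 'M[R]_n).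
Hypothesis M_sym : M^T = M.
Local Notation f := (real_complex R).
Local Notation Re := (@complex.Re R).
Let Mc := map_mx f M.
Let P := spectralmx Mc.
Let d := spectral_diag Mc.

Lemma complexify_hermsym : Mc \is hermsymmx.
Proof.
apply: realsym_hermsym.
  apply/is_hermitianmxP; rewrite expr0 scale1r.
  by apply/matrixP => i j; rewrite !mxE -{1}M_sym mxE.
by apply/mxOverP => i j; rewrite mxE realE -[0]/(f 0) !lecR le_total.
Qed.

Lemma spectral_decomposition : Mc = invmx P *m diag_mx d *m P.
Proof. exact/orthomx_spectralP/hermitian_normalmx/complexify_hermsym. Qed.

Lemma spectral_diag_realE j : d 0 j = f (Re (d 0 j)).
Proof.
rewrite RRe_real //.
exact: (mxOverP (hermitian_spectral_diag_real complexify_hermsym)).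
Qed.

Lemma eigenvalue_spectral_diag j : eigenvalue M (Re (d 0 j)).
Proof.
have P_unit : P \in unitmx := spectral_unit Mc.
have : eigenvalue Mc (d 0 j).
  apply/eigenvalueP; exists (row j P).
    rewrite {1}spectral_decomposition !mulmxA -row_mul mulmxV // -row_mul.
    by rewrite mul1mx row_diag_mx -scalemxAl -rowE.
  apply/eqP => /(congr1 (mulmx^~ (invmx P))).
  rewrite -row_mul mulmxV // mul0mx => /rowP/(_ j)/eqP.
  by rewrite !mxE eqxx oner_eq0.
rewrite eigenvalue_root_char spectral_diag_realE -map_char_poly fmorph_root.
by rewrite -eigenvalue_root_char.
Qed.

Lemma qform_spectral (u : 'rV[R]_n) : exists w : 'I_n -> R,
  [/\ forall j, 0 <= w j, qform M u = \sum_j Re (d 0 j) * w j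
    & sqnorm u = \sum_j w j].
Proof.
have P_unit : P \in unitmx := spectral_unit Mc.
have invP : invmx P = map_mx Num.conj P^T.
  exact: invmx_unitary (spectral_unitarymx Mc).
(* [y] holds the coordinates of [u] in an orthonormal eigenbasis of [M]. *)
set y := map_mx f u *m invmx P.
have Pu_conj j : (P *m map_mx f u^T) j 0 = (y 0 j)^*.
  rewrite !mxE rmorph_sum; apply: eq_bigr => l _.
  by rewrite invP !mxE rmorphM /= conjCK mulrC; congr (_ * _); apply/eqP;
    rewrite eq_complex /= oppr0 !eqxx.
have y_normE j : y 0 j * (y 0 j)^* = f (Re (y 0 j * (y 0 j)^*)).
  by rewrite RRe_real // ger0_real // mul_conjC_ge0.
exists (fun j => Re (y 0 j * (y 0 j)^*)); split.
- by move=> j; rewrite -lecR -y_normE mul_conjC_ge0.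
- apply: complexI; rewrite rmorph_sum /=.
  have -> : f (qform M u) = (y *m diag_mx d *m (P *m map_mx f u^T)) 0 0.
    have -> : y *m diag_mx d *m (P *m map_mx f u^T)
              = map_mx f u *m Mc *m map_mx f u^T.
      by rewrite spectral_decomposition /y !mulmxA.
    by rewrite -!map_mxM [RHS]mxE.
  rewrite mxE; apply: eq_bigr => j _.
  rewrite Pu_conj mul_mx_diag mxE mulrAC mulrC rmorphM.
  by rewrite {1}(spectral_diag_realE j) {1}(y_normE j).
- apply: complexI; rewrite rmorph_sum /=.
  have -> : f (sqnorm u) = (y *m (P *m map_mx f u^T)) 0 0.
    by rewrite /y mulmxA mulmxKV // -map_mxM mxE.
  by rewrite mxE; apply: eq_bigr => j _; rewrite Pu_conj -y_normE.
Qed.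

Lemma rayleigh_bounds (u : 'rV[R]_n) :
  lambda_min M * sqnorm u <= qform M u <= lambda_max M * sqnorm u.
Proof.
have [w [w_ge0 -> ->]] := qform_spectral u; apply: sum_sandwich => j.
by rewrite !ler_wpM2r ?lambda_min_le ?lambda_max_ge ?eigenvalue_spectral_diag.
Qed.

End RealSymmetricSpectrum.

Section QuadraticBounds.
Context {R : realType}.

Lemma eigenvalue_qform_bounds {n} {G : 'M[R]_n} {D N a : R} :
  (forall v, D * sqnorm v <= qform G v <= N * sqnorm v) ->
  eigenvalue G a -> D <= a <= N.
Proof.
move=> G_bd /eigenvalueP[v vG v0]; have := G_bd v.
by rewrite (qform_eigenvector vG) !ler_pM2r ?sqnorm_gt0.
Qed.

Lemma lambda_min_gram_ge0 {n p} (A : 'M[R]_(n, p)) :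
  0 <= lambda_min (A *m A^T).
Proof.
apply: lambda_min_ge0 => a /eigenvalueP[v vA v0].
have := sqnorm_ge0 (v *m A).
by rewrite -qform_gram (qform_eigenvector vA) pmulr_lge0 ?sqnorm_gt0.
Qed.

Lemma lambda_min_trmx_gram_ge0 {n p} (A : 'M[R]_(p, n)) :
  0 <= lambda_min (A^T *m A).
Proof. by have := lambda_min_gram_ge0 A^T; rewrite trmxK. Qed.

(* [D <= N] matters only for an empty spectrum, where [cond_num G = 0 / 0]. *)
Lemma posdef_cond_num_le {n} (G : 'M[R]_n) (D N : R) :
  G^T = G -> 0 < D -> D <= N ->
  (forall v, D * sqnorm v <= qform G v <= N * sqnorm v) ->
  posdef G /\ cond_num G <= N / D.
Proof.
move=> G_sym D_gt0 DN G_bd; split.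
  split=> // x x0; have := G_bd x^T; rewrite /qform trmxK => /andP[+ _].
  by apply: lt_le_trans; rewrite mulr_gt0 ?sqnorm_gt0 ?trmx_eq0.
have N_gt0 : 0 < N := lt_le_trans D_gt0 DN.
rewrite /cond_num; have [ex|noeig] := pselect (exists a, eigenvalue G a).
  have D_min : D <= lambda_min G.
    by apply: lambda_min_ge => // a /(eigenvalue_qform_bounds G_bd)/andP[].
  have max_N : lambda_max G <= N.
    by apply: lambda_max_le => // a /(eigenvalue_qform_bounds G_bd)/andP[].
  have min_gt0 : 0 < lambda_min G := lt_le_trans D_gt0 D_min.
  apply: (@le_trans _ _ (N / lambda_min G)).
    by apply: ler_wpM2r; rewrite // invr_ge0 ltW.
  by apply: ler_wpM2l; [exact: ltW | rewrite lef_pV2 ?posrE].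
have [-> ->] := lambda_extrema_spectrum0 G noeig.
by rewrite mul0r divr_ge0 // ltW.
Qed.

End QuadraticBounds.

Section GaussNewtonBounds.
Context {R : realType} {d n m k : nat}.
Variables (alpha : R) (X : 'M[R]_(d, n)) (V : 'M[R]_(m, d)) (W : 'M[R]_(k, m)).
Variable lam : 'I_m -> 'I_n -> R.
Hypotheses (alpha_ge0 : 0 <= alpha) (alpha_le1 : alpha <= 1).
Hypothesis lam_values : forall i j, lam i j = alpha \/ lam i j = 1.

Let Lam i := diag_mx (\row_(j < n) lam i j).
Let Gamma : 'M[R]_n :=
  \sum_(i < m) Lam i *m X^T *m (row i V)^T *m row i V *m X *m Lam i.
Let Gw : 'M[R]_(n * k) :=
  \sum_(i < m) kron (Lam i *m X^T *m X *m Lam i) (col i W *m (col i W)^T).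
Let G : 'M[R]_(n * k) := Gw + kron Gamma 1%:M.

Lemma lam_sq_bounds i j : alpha ^+ 2 <= (\row_(j < n) lam i j) 0 j ^+ 2 <= 1.
Proof.
have alpha_sq_le1 : alpha ^+ 2 <= 1 by rewrite expr_le1.
by rewrite mxE; have [-> | ->] := lam_values i j; rewrite ?expr1n lexx ?andbT.
Qed.

Lemma Gamma_sym : Gamma^T = Gamma.
Proof.
rewrite raddf_sum; apply: eq_bigr => i _ /=.
by rewrite !trmx_mul !trmxK tr_diag_mx !mulmxA.
Qed.

Lemma gauss_newton_sym : G^T = G.
Proof.
rewrite raddfD /= raddf_sum /= trmx_kron Gamma_sym trmx1; congr (_ + _).
apply: eq_bigr => i _ /=.
by rewrite trmx_kron !trmx_mul !trmxK tr_diag_mx !mulmxA.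
Qed.

Lemma weight_term_bounds (Z : 'M[R]_(n, k)) :
  alpha ^+ 2 * lambda_min (X^T *m X) * lambda_min (W *m W^T)
    * sqnorm (mxvec Z) <= qform Gw (mxvec Z)
  <= lambda_max (X^T *m X) * lambda_max (W *m W^T) * sqnorm (mxvec Z).
Proof.
rewrite /Gw qform_sum.
under eq_bigr do rewrite qform_kron_rank1 -(mulmxA (Lam _)) qform_diag_conj.
have XtX_sym : (X^T *m X)^T = X^T *m X by rewrite trmx_mul trmxK.
have WWt_sym : (W *m W^T)^T = W *m W^T by rewrite trmx_mul trmxK.
set u := fun i : 'I_m => (Z *m col i W)^T.
have /andP[XX_lo XX_hi] := sum_sandwich (index_enum 'I_m)
  (fun i => rayleigh_bounds (X^T *m X) XtX_sym (u i *m Lam i)).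
have /andP[Lam_lo Lam_hi] := sum_sandwich (index_enum 'I_m)
  (fun i => sqnorm_diag_bounds (u i) (lam_sq_bounds i)).
have /andP[WW_lo WW_hi] : lambda_min (W *m W^T) * sqnorm (mxvec Z)
    <= \sum_i sqnorm (u i) <= lambda_max (W *m W^T) * sqnorm (mxvec Z).
  rewrite sum_sqnorm_mul_col sqnorm_mxvec_rows; apply: sum_sandwich => j.
  exact: rayleigh_bounds.
have a_ge0 := lambda_min_trmx_gram_ge0 X.
have A_ge0 : 0 <= lambda_max (X^T *m X).
  exact: le_trans a_ge0 (lambda_min_le_max _).
rewrite mul1r in Lam_hi; apply/andP; split.
- rewrite -2!mulrA mulrCA; apply: le_trans _ XX_lo; apply: (ler_wpM2l a_ge0).
  by apply: le_trans _ Lam_lo; apply: ler_wpM2l WW_lo; exact: sqr_ge0.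
- rewrite -mulrA; apply: le_trans XX_hi _; apply: (ler_wpM2l A_ge0).
  exact: le_trans Lam_hi WW_hi.
Qed.

Lemma gamma_term_bounds (Z : 'M[R]_(n, k)) :
  lambda_min Gamma * sqnorm (mxvec Z) <= qform (kron Gamma 1%:M) (mxvec Z)
  <= lambda_max Gamma * sqnorm (mxvec Z).
Proof.
rewrite qform_kron_id sqnorm_mxvec_cols; apply: sum_sandwich => c.
exact: rayleigh_bounds Gamma_sym _.
Qed.

Lemma gauss_newton_qform_bounds (v : 'rV[R]_(n * k)) :
  (alpha ^+ 2 * lambda_min (X^T *m X) * lambda_min (W *m W^T)
    + lambda_min Gamma) * sqnorm v <= qform G v <=
  (lambda_max (X^T *m X) * lambda_max (W *m W^T) + lambda_max Gamma)
    * sqnorm v.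
Proof.
have /andP[Gw_lo Gw_hi] := weight_term_bounds (vec_mx v).
have /andP[Gamma_lo Gamma_hi] := gamma_term_bounds (vec_mx v).
rewrite vec_mxK in Gw_lo Gw_hi Gamma_lo Gamma_hi.
by rewrite qformD !mulrDl !lerD.
Qed.

Lemma gauss_newton_bounds_ordered :
  alpha ^+ 2 * lambda_min (X^T *m X) * lambda_min (W *m W^T)
    + lambda_min Gamma <=
  lambda_max (X^T *m X) * lambda_max (W *m W^T) + lambda_max Gamma.
Proof.
have a_ge0 := lambda_min_trmx_gram_ge0 X; have b_ge0 := lambda_min_gram_ge0 W.
rewrite lerD ?lambda_min_le_max // -mulrA.
apply: (@le_trans _ _ (lambda_min (X^T *m X) * lambda_min (W *m W^T))).
  by rewrite ler_piMl ?mulr_ge0 // expr_le1.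
by rewrite ler_pM ?lambda_min_le_max.
Qed.

End GaussNewtonBounds.

Theorem mainTheorem5 (R : realType) (alpha : R) (d n m k : nat)
    (X : 'M[R]_(d, n)) (V : 'M[R]_(m, d)) (W : 'M[R]_(k, m))
    (lam : 'I_m -> 'I_n -> R) :
  0 <= alpha <= 1 ->
  (forall (i : 'I_m) (j : 'I_n),
      leaky_relu_deriv alpha ((row i V *m X) 0 j) (lam i j)) ->
  let Lam := fun i : 'I_m => diag_mx (\row_(j < n) lam i j) in
  let Gamma : 'M[R]_n :=
    \sum_(i < m) Lam i *m X^T *m (row i V)^T *m row i V *m X *m Lam i in
  let G : 'M[R]_(n * k) :=
    \sum_(i < m) kron (Lam i *m X^T *m X *m Lam i) (col i W *m (col i W)^T)
    + kron Gamma (1%:M : 'M[R]_k) in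
  0 < alpha ^+ 2 * lambda_min (X^T *m X) * lambda_min (W *m W^T)
      + lambda_min Gamma ->
  posdef G /\
  cond_num G <=
    (lambda_max (X^T *m X) * lambda_max (W *m W^T) + lambda_max Gamma)
    / (alpha ^+ 2 * lambda_min (X^T *m X) * lambda_min (W *m W^T)
       + lambda_min Gamma).
Proof.
move=> /andP[alpha_ge0 alpha_le1] lam_deriv Lam Gamma G D_gt0.
have lam_values i j : lam i j = alpha \/ lam i j = 1 := (lam_deriv i j).1.
apply: posdef_cond_num_le D_gt0 _ _.
- exact: gauss_newton_sym.
- exact: gauss_newton_bounds_ordered.
- exact: gauss_newton_qform_bounds.
Qed.
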